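(* Let $(b,c)$ be a locally finite and connected graph over a countable set $X$ with a cocompact action of a group $G$ such that $H_{b,c}$ is $G$-invariant, and fix $x_0\in X$. Let $\mathcal{K}$ be the closure in $C(X)$ of $\{f\in\mathcal{H}^+:f(x_0)=1\}$ and $\mathcal{M}=\{f\in\mathcal{K}: f\text{ multiplicative}\}$. Then $\mathcal{M}=\mathrm{ex}\,\overline{\mathrm{conv}}\,\mathcal{M}$, the set of extreme points of the closed convex hull of $\mathcal{M}$.
   Context: A graph over $X$ is $(b,c)$ with $b:X\times X\to[0,\infty)$, $c:X\to\mathbb{R}$, $\sum_yb(x,y)<\infty$ ($b$ need not be symmetric); locally finite: each $x$ has finitely many $y$ with $b(x,y)>0$; connected: any two points are joined by a finite sequence $y_1,\dots,y_n$ with $b(y_i,y_{i+1})>0$. $C(X)$ carries the product topology. $H_{b,c}f(x)=\sum_yb(x,y)(f(x)-f(y))+c(x)f(x)$ on $\mathrm{Dom}(H)=\{f:\sum_yb(x,y)|f(y)|<\infty\ \forall x\}$; $\mathcal{H}^+$: nonnegative, nonzero $f$ with $Hf=0$. $T_gf(x)=f(g^{-1}x)$; cocompact: $GV=X$ for some finite $V$; $H$ is $G$-invariant if $T_g$ preserves $\mathrm{Dom}(H)$ and $HT_g=T_gH$. $f$ is multiplicative if $T_gf=\gamma(g^{-1})f$ for all $g\in G$ for some homomorphism $\gamma:G\to(0,\infty)$. *)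

From HB Require Import structures.
From mathcomp Require Import all_boot all_order all_algebra.
From mathcomp Require Import all_classical all_reals all_analysis.
Set Implicit Arguments. Unset Strict Implicit. Unset Printing Implicit Defensive.
Import Order.TTheory GRing.Theory Num.Theory.
Import numFieldNormedType.Exports.
Local Open Scope classical_set_scope.
Local Open Scope ring_scope.

Definition locally_finite {R : realType} {X : Type} (b : X -> X -> R) : Prop :=
  forall x, finite_set [set y | 0 < b x y].

Definition connected_graph {R : realType} {X : Type} (b : X -> X -> R) : Prop :=
  forall x y : X, exists s : seq X,
    path (fun u v => 0 < b u v) x s /\ last x s = y.

(* H_{b,c} f (x) = sum_y b(x,y)(f(x)-f(y)) + c(x) f(x); for a locally finite
   graph the sum is over the finite set of y with b(x,y) > 0 (other terms
   vanish since b >= 0). *)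
Definition Hop {R : realType} {X : choiceType} (b : X -> X -> R) (c : X -> R)
  (f : X -> R) : X -> R :=
  fun x => (\sum_(y \in [set y | 0 < b x y]) (b x y * (f x - f y))) + c x * f x.

Definition DomH {R : realType} {X : choiceType} (b : X -> X -> R) (f : X -> R) : Prop :=
  forall x, (\esum_(y in [set: X]) (b x y * `|f y|)%:E < +oo)%E.

Definition Hplus {R : realType} {X : choiceType} (b : X -> X -> R) (c : X -> R) :
  set (X -> R) :=
  [set f | (forall x, 0 <= f x) /\ (exists x, f x != 0) /\ DomH b f /\
           (forall x, Hop b c f x = 0)].

Definition is_action (G : groupType) (X : Type) (act : G -> X -> X) : Prop :=
  (forall x, act 1%g x = x) /\ (forall g h x, act (g * h)%g x = act g (act h x)).

Definition Tg (G : groupType) (X : Type) {R : Type} (act : G -> X -> X) (g : G)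
  (f : X -> R) : X -> R := fun x => f (act (g^-1)%g x).

Definition cocompact (G : groupType) (X : Type) (act : G -> X -> X) : Prop :=
  exists V : set X, finite_set V /\ forall x, exists g v, V v /\ x = act g v.

Definition G_invariant {R : realType} (G : groupType) (X : choiceType)
  (act : G -> X -> X) (b : X -> X -> R) (c : X -> R) : Prop :=
  forall g : G, (forall f, DomH b f -> DomH b (Tg act g f)) /\
    (forall f, DomH b f -> Hop b c (Tg act g f) = Tg act g (Hop b c f)).

Definition pos_hom {R : realType} (G : groupType) (gam : G -> R) : Prop :=
  (forall g, 0 < gam g) /\ (forall g h, gam (g * h)%g = gam g * gam h).

Definition multiplicative_fn {R : realType} (G : groupType) (X : Type)
  (act : G -> X -> X) (f : X -> R) : Prop :=
  exists gam : G -> R, pos_hom gam /\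
    forall g : G, Tg act g f = (fun x => gam (g^-1)%g * f x).

(* convex hull in C(X) = R^X: finite convex combinations (pointwise) *)
Definition conv_hull {R : realType} {X : Type} (A : set (X -> R)) : set (X -> R) :=
  [set f | exists (n : nat) (t : 'I_n -> R) (g : 'I_n -> X -> R),
     (forall i, 0 <= t i) /\ \sum_(i < n) t i = 1 /\ (forall i, A (g i)) /\
     (forall x, f x = \sum_(i < n) t i * g i x)].

Definition ptws_closure {R : realType} {X : Type} (A : set (X -> R)) : set (X -> R) :=
  closure (A : set {ptws X -> R}).

Definition extreme_points {R : realType} {X : Type} (C : set (X -> R)) : set (X -> R) :=
  [set p | C p /\ forall u v (t : R), C u -> C v -> 0 < t < 1 ->
     p = (fun x => t * u x + (1 - t) * v x) -> u = p /\ v = p].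

(* By the minimum principle on the connected graph, [K] consists of strictly
   positive harmonic functions normalized at [x0].  It is closed in the product
   topology, and so is the inequality [u (g x) ^+ 2 <= u (g (g x)) * u x], which
   holds on the convex hull of [M] by Cauchy-Schwarz since
   [h (g x) = h (g x0) * h x] for [h] in [M].
   An [f] in [M] is extreme: if [f = t u + (1 - t) v], both inequalities must be
   equalities, so [u (g y) = f (g x0) * u y]; with [r] the largest ratio [u / f]
   on a finite fundamental domain, [r f - u] is nonnegative, harmonic and
   vanishes somewhere, hence [u = f].
   Conversely, Harnack's inequality bounds [h (g x0) < B] uniformly on [K], so
   every [p] of the closed convex hull is a proper convex combination, with
   weight [p (g x0) / B], of its normalized shift [p (g .) / p (g x0)] and of a
   complement, both again in the closed convex hull; if [p] is extreme, it
   equals its normalized shift. *)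

From HB Require Import structures.
From mathcomp Require Import all_boot all_order all_algebra.
From mathcomp Require Import all_classical all_reals all_analysis.
From mathcomp Require Import finmap ring lra.
Import Order.TTheory GRing.Theory Num.Theory.
Import numFieldNormedType.Exports.
Local Open Scope classical_set_scope.
Local Open Scope ring_scope.
Set Implicit Arguments. Unset Strict Implicit.

Lemma argmax_seq (R : realDomainType) (T : eqType) (phi : T -> R) (s : seq T) v0 :
  v0 \in s -> exists2 m, m \in s & forall v, v \in s -> phi v <= phi m.
Proof.
elim: s v0 => [//|a [|a' s] IH] v0 _.
  by exists a; rewrite ?mem_head // => v; rewrite inE => /eqP->.
have [m ms Hm] := IH a' (mem_head _ _).
have [am|ma] := leP (phi a) (phi m).
  by exists m; [rewrite inE ms orbT | move=> v; rewrite inE => /orP[/eqP->|/Hm]].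
exists a; first exact: mem_head.
by move=> v; rewrite inE => /orP[/eqP->//|/Hm/le_trans]; apply; apply: ltW.
Qed.

Lemma weighted_cauchy_schwarz (R : realFieldType) n (w a : 'I_n -> R) :
  (forall i, 0 <= w i) ->
  (\sum_(i < n) w i * a i) ^+ 2 <= (\sum_(i < n) w i * a i ^+ 2) * \sum_(i < n) w i.
Proof.
move=> w0; set A := \sum_(i < n) _ * a i; set B := \sum_(i < n) _ * _ ^+ 2.
set W := \sum_(i < n) w i; have W0 : 0 <= W by rewrite sumr_ge0.
have quadr_ge0 l : 0 <= B - 2 * l * A + l ^+ 2 * W.
  have <- : \sum_(i < n) w i * (a i - l) ^+ 2 = B - 2 * l * A + l ^+ 2 * W.
    rewrite /B /A /W (eq_bigr (fun i => w i * a i ^+ 2 + (- (2 * l)) * (w i * a i)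
      + l ^+ 2 * w i)); last by move=> i _; ring.
    by rewrite !big_split /= -!mulr_sumr; ring.
  by rewrite sumr_ge0 // => i _; rewrite mulr_ge0 // sqr_ge0.
have [W_eq0|W_neq0] := eqVneq W 0.
  have w_eq0 := psumr_eq0P (fun i _ => w0 i) W_eq0.
  by rewrite W_eq0 mulr0 /A big1 ?expr0n // => i _; rewrite w_eq0 ?mul0r.
have Wgt0 : 0 < W by rewrite lt_def W_neq0 W0.
have := mulr_ge0 W0 (quadr_ge0 (A / W)).
have -> : W * (B - 2 * (A / W) * A + (A / W) ^+ 2 * W) = B * W - A ^+ 2 by field.
by rewrite subr_ge0.
Qed.

(* A mixture of two log-convex triples can only be geometric if both are
   proportional to it: equality case of Cauchy-Schwarz. *)
Lemma log_convex_mixture_eq (R : realFieldType) (t u0 u1 u2 v0 v1 v2 k : R) :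
  0 < t < 1 -> 0 < u0 -> 0 < v0 -> u1 ^+ 2 <= u2 * u0 -> v1 ^+ 2 <= v2 * v0 ->
  t * u1 + (1 - t) * v1 = k * (t * u0 + (1 - t) * v0) ->
  t * u2 + (1 - t) * v2 = k ^+ 2 * (t * u0 + (1 - t) * v0) -> u1 = k * u0.
Proof.
move=> /andP[t0 t1] u00 v00 u_lc v_lc mix1 mix2.
set s := 1 - t in mix1 mix2; have s0 : 0 < s by rewrite subr_gt0.
set F := t * u0 + s * v0 in mix1 mix2; have F0 : 0 < F by rewrite addr_gt0 ?mulr_gt0.
have : (t * v0 * u1 ^+ 2 + s * u0 * v1 ^+ 2) * F <= u0 * v0 * (t * u2 + s * v2) * F.
  apply: ler_wpM2r; first exact: ltW.
  have -> : u0 * v0 * (t * u2 + s * v2) = t * v0 * (u2 * u0) + s * u0 * (v2 * v0) by ring.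
  by rewrite lerD // ler_wpM2l // mulr_ge0 // ltW.
have -> : u0 * v0 * (t * u2 + s * v2) * F =
    u0 * v0 * (t * u1 + s * v1) ^+ 2 by rewrite mix1 mix2; ring.
rewrite -subr_le0 (_ : _ - _ = t * s * (u1 * v0 - v1 * u0) ^+ 2); last by rewrite /F; ring.
rewrite pmulr_rle0 ?mulr_gt0 // => sq_le0.
have /eqP : (u1 * v0 - v1 * u0) ^+ 2 = 0 by apply/eqP; rewrite eq_le sq_le0 sqr_ge0.
rewrite sqrf_eq0 subr_eq0 => /eqP uv.
apply: (mulIf (lt0r_neq0 F0)).
have -> : u1 * F = u0 * (t * u1 + s * v1) by rewrite /F; nra.
by rewrite mix1; ring.
Qed.

Lemma closure_homo (T U : topologicalType) (F : T -> U) (A : set T) (B : set U) p :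
  closure A p -> F @ nbhs p --> F p -> {homo F : a / A a >-> B a} -> closure B (F p).
Proof.
move=> Ap Fp AB N /Fp NF; have [a [Aa Na]] := Ap _ NF.
by exists (F a); split => //; apply: AB.
Qed.

Lemma closed_homo_closure (T U : topologicalType) (F : T -> U) (A : set T) (C : set U) p :
  closed C -> closure A p -> F @ nbhs p --> F p -> {homo F : a / A a >-> C a} -> C (F p).
Proof. by move=> Ccl Ap Fp FAC; apply: Ccl; apply: closure_homo Ap Fp FAC. Qed.

Lemma ptws_cvg (R : realType) (X : choiceType) (F : set_system {ptws X -> R})
    (f : {ptws X -> R}) : Filter F ->
  (forall x, (fun g : {ptws X -> R} => g x) @ F --> f x) -> F --> f.
Proof.
move=> FF Fx; apply/cvg_sup => x U.
rewrite (@nbhsE (initial_topology (fun g : X -> R => g x)) f).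
case=> B [[C oC <- Cf]] /filterS; apply.
by apply: (Fx x); rewrite nbhsE; exists C.
Qed.

Lemma ptws_eval_cvg (R : realType) (X : choiceType) (p : {ptws X -> R}) x :
  (fun h : {ptws X -> R} => h x) @ nbhs p --> p x.
Proof. exact: (@proj_continuous X (fun _ => R) x p). Qed.

Lemma sub_conv_hull (R : realType) (X : Type) (A : set (X -> R)) : A `<=` conv_hull A.
Proof.
move=> f Af; exists 1%N, (fun=> 1), (fun=> f).
by rewrite big_ord1; do 3!split=> //; move=> x; rewrite big_ord1 mul1r.
Qed.

Definition normalized_harmonic (R : realType) (X : choiceType) (b : X -> X -> R)
    (c : X -> R) (x0 : X) : set (X -> R) :=
  [set h | (forall x, 0 <= h x) /\ (forall x, Hop b c h x = 0) /\ h x0 = 1].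

Definition normalized_multiplicative (R : realType) (G : groupType) (X : Type)
    (act : G -> X -> X) (x0 : X) (m : X -> R) :=
  forall g y, m (act g y) = m (act g x0) * m y.

Definition orbit_log_convex (R : realType) (G : groupType) (X : Type)
    (act : G -> X -> X) (u : X -> R) :=
  forall g x, u (act g x) ^+ 2 <= u (act g (act g x)) * u x.

Section Multiplicative.
Variables (R : realType) (G : groupType) (X : Type) (act : G -> X -> X) (x0 : X).

Lemma multiplicative_normalized (f : X -> R) :
  multiplicative_fn act f -> f x0 = 1 -> normalized_multiplicative act x0 f.
Proof.
move=> [gam [_ Tf]] fx0.
have fE g y : f (act g y) = gam g * f y.
  by have /(congr1 (fun h => h y)) := Tf g^-1%g; rewrite /Tg /= invgK.
by move=> g y; rewrite !fE fx0 mulr1.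
Qed.

Lemma normalized_multiplicative_fn (f : X -> R) : is_action act ->
  (forall y, 0 < f y) -> normalized_multiplicative act x0 f -> multiplicative_fn act f.
Proof.
move=> [_ actM] f_gt0 fM; exists (fun g => f (act g x0)); split.
  by split=> // g h; rewrite actM fM.
by move=> g; apply: funext => x; rewrite /Tg fM.
Qed.

Definition orbit_shift g (h : X -> R) x := h (act g x) / h (act g x0).

Definition orbit_shift_complement (B : R) g (h : X -> R) x :=
  (h x - h (act g x) / B) / (1 - h (act g x0) / B).

Lemma orbit_shift_decomposition (B : R) g h : 0 < h (act g x0) < B ->
  h = fun x => h (act g x0) / B * orbit_shift g h x +
               (1 - h (act g x0) / B) * orbit_shift_complement B g h x.
Proof.
case/andP=> h_gt0 h_ltB; have B_gt0 := lt_trans h_gt0 h_ltB.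
apply: funext => x; rewrite /orbit_shift /orbit_shift_complement; field.
by rewrite !lt0r_neq0 ?subr_gt0.
Qed.

End Multiplicative.

Lemma closed_orbit_log_convex (R : realType) (G : groupType) (X : choiceType)
    (act : G -> X -> X) :
  closed [set u : {ptws X -> R} | orbit_log_convex act u].
Proof.
move=> u lcu g x; rewrite -subr_ge0.
apply: (closed_homo_closure (F := fun h : {ptws X -> R} =>
  h (act g (act g x)) * h x - h (act g x) ^+ 2) (C := [set r : R | 0 <= r])) lcu _ _.
- exact: closed_ge.
- by rewrite expr2; apply: cvgB; apply: cvgM; exact: ptws_eval_cvg.
- by move=> h lch /=; rewrite subr_ge0.
Qed.

Section HarmonicFunctions.
Variables (R : realType) (X : choiceType) (b : X -> X -> R) (c : X -> R).
Hypotheses (b_ge0 : forall x y, 0 <= b x y) (b_lf : locally_finite b).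

Local Notation nbrs x := (fset_set [set y | 0 < b x y]).
Local Notation harmonic h := (forall x, Hop b c h x = 0).

Lemma HopE f x :
  Hop b c f x = \sum_(y <- nbrs x) b x y * (f x - f y) + c x * f x.
Proof. by rewrite /Hop fsbig_finite. Qed.

Lemma Hop_lincomb f g (a d : R) x :
  Hop b c (fun y => a * f y + d * g y) x = a * Hop b c f x + d * Hop b c g x.
Proof.
rewrite !HopE !mulrDr !mulr_sumr.
rewrite (eq_bigr (fun y => a * (b x y * (f x - f y)) + d * (b x y * (g x - g y))));
  last by move=> y _; ring.
by rewrite big_split /= -!mulr_sumr; ring.
Qed.

Lemma Hop_sum n (t : 'I_n -> R) (g : 'I_n -> X -> R) x :
  Hop b c (fun y => \sum_(i < n) t i * g i y) x = \sum_(i < n) t i * Hop b c (g i) x.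
Proof.
rewrite HopE; under [RHS]eq_bigr do rewrite HopE mulrDr mulr_sumr.
rewrite big_split /= exchange_big /=; congr (_ + _).
  apply: eq_bigr => y _; rewrite -sumrB mulr_sumr; apply: eq_bigr => i _; ring.
by rewrite mulr_sumr; apply: eq_bigr => i _; ring.
Qed.

Lemma le_sum_nbrs (F : X -> R) x z : (forall y, 0 <= F y) -> 0 < b x z ->
  F z <= \sum_(y <- nbrs x) F y.
Proof.
move=> F0 bxz; have zx : z \in nbrs x by rewrite in_fset_set //; apply/mem_set.
by rewrite (bigD1_seq z zx (fset_uniq _)) /= lerDl sumr_ge0.
Qed.

Lemma harmonic_nbr_eq0 w x z : (forall y, 0 <= w y) -> Hop b c w x = 0 ->
  w x = 0 -> 0 < b x z -> w z = 0.
Proof.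
move=> w0; rewrite HopE => Hw wx bxz; apply/eqP; rewrite eq_le w0 andbT.
have sum0 : \sum_(y <- nbrs x) b x y * w y = 0.
  move: Hw; rewrite wx mulr0 addr0; under eq_bigr do rewrite sub0r mulrN.
  by rewrite sumrN => /eqP; rewrite oppr_eq0 => /eqP.
rewrite -(pmulr_rle0 _ bxz) -sum0.
by apply: (le_sum_nbrs (F := fun y => b x y * w y)) => // y; rewrite mulr_ge0.
Qed.

Lemma harnack_nbr h x z : (forall y, 0 <= h y) -> Hop b c h x = 0 -> 0 < b x z ->
  h z <= (`|\sum_(y <- nbrs x) b x y + c x| / b x z) * h x.
Proof.
move=> h0; rewrite HopE => Hh bxz.
have sumE : \sum_(y <- nbrs x) b x y * h y = (\sum_(y <- nbrs x) b x y + c x) * h x.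
  move: Hh; under eq_bigr do rewrite mulrBr.
  by rewrite sumrB -mulr_suml mulrDl addrAC => /eqP; rewrite subr_eq0 => /eqP.
rewrite mulrAC ler_pdivlMr // mulrC.
apply: le_trans (_ : _ <= (\sum_(y <- nbrs x) b x y + c x) * h x) _.
  rewrite -sumE; apply: (le_sum_nbrs (F := fun y => b x y * h y)) => // y.
  by rewrite mulr_ge0.
by rewrite ler_wpM2r // real_ler_norm // num_real.
Qed.

Lemma harnack_path s x : path (fun u v => 0 < b u v) x s ->
  exists2 C, 0 <= C & forall h, (forall y, 0 <= h y) -> harmonic h ->
    h (last x s) <= C * h x.
Proof.
elim: s x => [|z s IH] x /=; first by exists 1 => // h _ _; rewrite mul1r.
case/andP=> bxz /IH[C C0 HC].
exists (C * (`|\sum_(y <- nbrs x) b x y + c x| / b x z)).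
  by rewrite mulr_ge0 // divr_ge0 // ltW.
move=> h h0 hh; rewrite -mulrA; apply: le_trans (HC h h0 hh) _.
by rewrite ler_wpM2l // harnack_nbr.
Qed.

Lemma Hop_cvg x (p : {ptws X -> R}) :
  (fun h : {ptws X -> R} => Hop b c h x) @ nbhs p --> Hop b c p x.
Proof.
have -> : (fun h : {ptws X -> R} => Hop b c h x) = fun h : {ptws X -> R} =>
    \sum_(y <- nbrs x) b x y * (h x - h y) + c x * h x.
  by apply: funext => h; rewrite HopE.
rewrite HopE; apply: cvgD; last by apply: cvgM; [exact: cvg_cst | exact: ptws_eval_cvg].
apply: cvg_big; first exact: add_continuous.
move=> y _; apply: cvgM; first exact: cvg_cst.
by apply: cvgB; exact: ptws_eval_cvg.
Qed.

Lemma DomH_locally_finite f : DomH b f.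
Proof.
move=> x; have -> : (\esum_(y in [set: X]) (b x y * `|f y|)%:E =
    \esum_(y in [set y | (0 < b x y)%R]) (b x y * `|f y|)%:E)%E.
  rewrite [RHS]esum_mkcond; apply: eq_esum => y _; case: ifPn => // /negP yN.
  suff -> : b x y = 0 by rewrite mul0r.
  by apply/eqP; rewrite eq_le b_ge0 andbT leNgt; apply/negP => bxy; apply/yN/mem_set.
rewrite esum_fset //; last by move=> y _; rewrite lee_fin mulr_ge0.
by rewrite fsumEFin // ltry.
Qed.

Hypothesis b_conn : connected_graph b.

Lemma harmonic_eq0 w y : (forall x, 0 <= w x) -> harmonic w -> w y = 0 ->
  forall z, w z = 0.
Proof.
move=> w0 hw wy z; have [s [ps <-]] := b_conn y z.
elim: s y ps wy => [//|z' s IH] y /= /andP[byz ps] wy.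
exact: IH ps (harmonic_nbr_eq0 w0 (hw y) wy byz).
Qed.

Variable x0 : X.
Local Notation K := (normalized_harmonic b c x0).

Lemma normalized_harmonic_gt0 h : K h -> forall y, 0 < h y.
Proof.
move=> [h0 [hh hx0]] y; rewrite lt_def h0 andbT; apply/eqP => hy.
by move: (harmonic_eq0 h0 hh hy x0); rewrite hx0 => /eqP; rewrite oner_eq0.
Qed.

Lemma normalized_harmonic_bounded y : exists2 B, 0 < B & forall h, K h -> h y < B.
Proof.
have [s [ps <-]] := b_conn x0 y; have [C C0 HC] := harnack_path ps.
exists (C + 1); first by rewrite ltr_wpDl.
move=> h [h0 [hh hx0]]; apply: le_lt_trans (HC h h0 hh) _.
by rewrite hx0 mulr1 ltrDl.
Qed.

Lemma conv_hull_normalized_harmonic (A : set (X -> R)) :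
  A `<=` K -> conv_hull A `<=` K.
Proof.
move=> AK f [n [t [g [t0 [t1 [Ag /funext ->]]]]]]; split; [|split].
- by move=> x; rewrite sumr_ge0 // => i _; rewrite mulr_ge0 //; case: (AK _ (Ag i)).
- move=> x; rewrite Hop_sum big1 // => i _.
  by case: (AK _ (Ag i)) => _ [-> _]; rewrite mulr0.
- by rewrite -t1; apply: eq_bigr => i _; case: (AK _ (Ag i)) => _ [_ ->]; rewrite mulr1.
Qed.

Lemma closed_normalized_harmonic : closed (K : set {ptws X -> R}).
Proof.
move=> p Kp; split; [|split].
- move=> x; apply: (closed_homo_closure (F := fun h : {ptws X -> R} => h x)
    (C := [set r : R | 0 <= r])) Kp _ _.
  + exact: closed_ge.
  + exact: ptws_eval_cvg.
  + by move=> h [h0 _]; exact: h0.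
- move=> x; apply: (closed_homo_closure (F := fun h : {ptws X -> R} => Hop b c h x)
    (C := [set r : R | r = 0])) Kp _ _.
  + exact: closed_eq.
  + exact: Hop_cvg.
  + by move=> h [_ [hh _]]; exact: hh.
- apply: (closed_homo_closure (F := fun h : {ptws X -> R} => h x0)
    (C := [set r : R | r = 1])) Kp _ _.
  + exact: closed_eq.
  + exact: ptws_eval_cvg.
  + by move=> h [_ [_ hx0]].
Qed.

Lemma closure_Hplus : ptws_closure [set f | Hplus b c f /\ f x0 = 1] = K.
Proof.
apply/seteqP; split.
  apply: subset_trans closed_normalized_harmonic; apply: closureS.
  by move=> f [[f0 [_ [_ Hf]]] fx0].
move=> h [h0 [hh hx0]]; apply: subset_closure; split => //.
do 2!split=> //; first by exists x0; rewrite hx0 oner_eq0.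
by split=> //; exact: DomH_locally_finite.
Qed.

Variables (G : groupType) (act : G -> X -> X).

Lemma normalized_multiplicative_unique u f : cocompact act -> K u -> K f ->
  (forall g y, u (act g y) = f (act g x0) * u y) ->
  normalized_multiplicative act x0 f -> u = f.
Proof.
move=> [V [finV actV]] Ku Kf uM fM.
have u_gt0 := normalized_harmonic_gt0 Ku.
have f_gt0 := normalized_harmonic_gt0 Kf.
have [_ [v0 [Vv0 _]]] := actV x0.
have inV v : V v -> v \in fset_set V by move=> Vv; rewrite in_fset_set //; apply/mem_set.
have [m _ max_m] := argmax_seq (fun v => u v / f v) (inV _ Vv0).
set r := u m / f m.
have u_le y : u y <= r * f y.
  have [g [v [Vv ->]]] := actV y.
  rewrite uM (fM g v) mulrCA ler_wpM2l ?(ltW (f_gt0 _)) //.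
  by rewrite -ler_pdivrMr // max_m // inV.
set w := fun y => r * f y + (-1) * u y.
have w_ge0 y : 0 <= w y by rewrite /w mulN1r subr_ge0.
have w_harm y : Hop b c w y = 0.
  rewrite Hop_lincomb; case: Kf => _ [-> _]; case: Ku => _ [-> _].
  by rewrite !mulr0 addr0.
have w_m : w m = 0 by rewrite /w /r mulN1r divfK ?subrr // lt0r_neq0.
have w0 := harmonic_eq0 w_ge0 w_harm w_m.
have r1 : r = 1.
  have := w0 x0; rewrite /w mulN1r; case: Kf => _ [_ ->]; case: Ku => _ [_ ->].
  by rewrite mulr1 => /eqP; rewrite subr_eq0 => /eqP.
by apply: funext => y; have /eqP := w0 y; rewrite /w r1 mul1r mulN1r subr_eq0 => /eqP.
Qed.

Lemma normalized_multiplicative_mixture f u v (t : R) : cocompact act ->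
  K f -> normalized_multiplicative act x0 f ->
  K u -> orbit_log_convex act u -> K v -> orbit_log_convex act v ->
  0 < t < 1 -> f = (fun x => t * u x + (1 - t) * v x) -> u = f.
Proof.
move=> cc Kf fM Ku u_lc Kv v_lc t01 fE.
have u_gt0 := normalized_harmonic_gt0 Ku.
have v_gt0 := normalized_harmonic_gt0 Kv.
have fx x : f x = t * u x + (1 - t) * v x by rewrite fE.
apply: (normalized_multiplicative_unique cc Ku Kf _ fM) => g y.
apply: (log_convex_mixture_eq t01 (u_gt0 y) (v_gt0 y) (u_lc g y) (v_lc g y)).
  by rewrite -!fx fM.
by rewrite -!fx fM (fM g y) expr2 mulrA.
Qed.

Variable M : set (X -> R).
Hypothesis M_sub : forall m, M m -> K m /\ normalized_multiplicative act x0 m.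
Local Notation C := (ptws_closure (conv_hull M)).

Let MK : M `<=` K. Proof. by move=> m /M_sub[]. Qed.

Let conv_hull_gt0 h : conv_hull M h -> forall y, 0 < h y.
Proof.
by move=> /(conv_hull_normalized_harmonic MK); exact: normalized_harmonic_gt0.
Qed.

Lemma conv_hull_orbit_shift g h : conv_hull M h -> conv_hull M (orbit_shift act x0 g h).
Proof.
move=> Mh; have hg0 := conv_hull_gt0 Mh (act g x0).
case: Mh => [n [t [m [t0 [t1 [Mm hE]]]]]].
exists n, (fun i => t i * m i (act g x0) / h (act g x0)), m.
split; [|split; [|split=> //]].
- by move=> i; rewrite divr_ge0 ?mulr_ge0 ?(ltW hg0) //; case: (MK (Mm i)).
- by rewrite -mulr_suml -hE divff // lt0r_neq0.
- move=> x; rewrite /orbit_shift hE mulr_suml; apply: eq_bigr => i _.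
  by rewrite (M_sub (Mm i)).2; ring.
Qed.

Lemma conv_hull_orbit_shift_complement (B : R) g h :
  (forall k, K k -> k (act g x0) < B) ->
  conv_hull M h -> conv_hull M (orbit_shift_complement act x0 B g h).
Proof.
move=> K_ltB Mh; have hg0 := conv_hull_gt0 Mh (act g x0).
have h_ltB := K_ltB _ (conv_hull_normalized_harmonic MK Mh).
have B_gt0 := lt_trans hg0 h_ltB.
have den_gt0 : 0 < 1 - h (act g x0) / B by rewrite subr_gt0 ltr_pdivrMr // mul1r.
case: Mh => [n [t [m [t0 [t1 [Mm hE]]]]]].
exists n, (fun i => t i * (1 - m i (act g x0) / B) / (1 - h (act g x0) / B)), m.
split; [|split; [|split=> //]].
- move=> i; rewrite divr_ge0 ?mulr_ge0 ?(ltW den_gt0) //.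
  by rewrite subr_ge0 ler_pdivrMr // mul1r; apply/ltW/K_ltB/MK.
- rewrite -mulr_suml (eq_bigr (fun i => t i - t i * m i (act g x0) / B));
    last by move=> i _; ring.
  by rewrite sumrB -mulr_suml t1 -hE divff // lt0r_neq0.
- move=> x; rewrite /orbit_shift_complement.
  transitivity ((\sum_(i < n) (t i * m i x - t i * m i (act g x) / B)) /
    (1 - h (act g x0) / B)); first by rewrite sumrB -mulr_suml -!hE.
  by rewrite mulr_suml; apply: eq_bigr => i _; rewrite (M_sub (Mm i)).2; ring.
Qed.

Lemma conv_hull_orbit_log_convex : conv_hull M `<=` [set u | orbit_log_convex act u].
Proof.
move=> h [n [t [m [t0 [t1 [Mm /funext ->]]]]]] g x /=.
have m_ge0 i y : 0 <= m i y by case: (M_sub (Mm i)) => -[].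
have mM i := (M_sub (Mm i)).2.
rewrite [X in X ^+ 2](eq_bigr (fun i => (t i * m i x) * m i (act g x0))); last first.
  by move=> i _; rewrite mM; ring.
rewrite [X in _ <= X * _](eq_bigr (fun i => (t i * m i x) * m i (act g x0) ^+ 2));
  last first.
  by move=> i _; rewrite mM (mM i g x); ring.
by apply: weighted_cauchy_schwarz => i; rewrite mulr_ge0.
Qed.

Lemma closure_conv_hull_sub : C `<=` [set u | K u /\ orbit_log_convex act u].
Proof.
move=> u Cu; split.
  exact: (closed_normalized_harmonic
    (closureS (T := {ptws X -> R}) (conv_hull_normalized_harmonic MK) Cu)).
exact: (closed_orbit_log_convex
  (closureS (T := {ptws X -> R}) conv_hull_orbit_log_convex Cu)).
Qed.

Let C_gt0 p : C p -> forall y, 0 < p y.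
Proof. by move=> /closure_conv_hull_sub[Kp _]; exact: normalized_harmonic_gt0. Qed.

Lemma closure_conv_hull_orbit_shift g p : C p -> C (orbit_shift act x0 g p).
Proof.
move=> Cp; have pg0 := C_gt0 Cp (act g x0).
apply: (closure_homo (F := orbit_shift act x0 g : {ptws X -> R} -> {ptws X -> R}))
  Cp _ _.
- apply: ptws_cvg => x; apply: cvgM; first exact: ptws_eval_cvg.
  by apply: cvgV; [exact: lt0r_neq0 | exact: ptws_eval_cvg].
- exact: conv_hull_orbit_shift g.
Qed.

Lemma closure_conv_hull_orbit_shift_complement (B : R) g p :
  (forall k, K k -> k (act g x0) < B) -> C p ->
  C (orbit_shift_complement act x0 B g p).
Proof.
move=> K_ltB Cp; have pg0 := C_gt0 Cp (act g x0).
have [Kp _] := closure_conv_hull_sub Cp.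
have B_gt0 := lt_trans pg0 (K_ltB _ Kp).
have den_neq0 : 1 - p (act g x0) / B != 0.
  by rewrite lt0r_neq0 // subr_gt0 ltr_pdivrMr // mul1r K_ltB.
apply: (closure_homo (F := orbit_shift_complement act x0 B g
  : {ptws X -> R} -> {ptws X -> R})) Cp _ _.
- apply: ptws_cvg => x; apply: cvgM.
    apply: cvgB; first exact: ptws_eval_cvg.
    by apply: cvgM; [exact: ptws_eval_cvg | exact: cvg_cst].
  apply: cvgV => //; apply: cvgB; first exact: cvg_cst.
  by apply: cvgM; [exact: ptws_eval_cvg | exact: cvg_cst].
- by move=> h; exact: conv_hull_orbit_shift_complement.
Qed.

Lemma extreme_normalized_multiplicative p :
  extreme_points C p -> normalized_multiplicative act x0 p.
Proof.
move=> [Cp p_ext] g.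
have [B B_gt0 K_ltB] := normalized_harmonic_bounded (act g x0).
have [Kp _] := closure_conv_hull_sub Cp.
have pg0 := normalized_harmonic_gt0 Kp (act g x0).
have pg_range : 0 < p (act g x0) < B by rewrite pg0 K_ltB.
have t01 : 0 < p (act g x0) / B < 1.
  by rewrite divr_gt0 //= ltr_pdivrMr // mul1r K_ltB.
have [shift_eq _] := p_ext _ _ _ (closure_conv_hull_orbit_shift (g := g) Cp)
  (closure_conv_hull_orbit_shift_complement K_ltB Cp) t01
  (orbit_shift_decomposition pg_range).
move=> y; have /= <- := congr1 (fun h => h y) shift_eq.
by rewrite /orbit_shift mulrC divfK // lt0r_neq0.
Qed.

Lemma multiplicative_extreme f : cocompact act -> M f -> extreme_points C f.
Proof.
move=> cc Mf; have [Kf fM] := M_sub Mf.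
split; first exact/subset_closure/sub_conv_hull.
move=> u v t Cu Cv t01 fE.
have [Ku u_lc] := closure_conv_hull_sub Cu.
have [Kv v_lc] := closure_conv_hull_sub Cv.
split; first exact: normalized_multiplicative_mixture cc Kf fM Ku u_lc Kv v_lc t01 fE.
apply: (normalized_multiplicative_mixture (t := 1 - t) cc Kf fM Kv v_lc Ku u_lc).
  by case/andP: t01 => t0 t1; apply/andP; split; lra.
by rewrite fE; apply: funext => x; ring.
Qed.

End HarmonicFunctions.

Unset Implicit Arguments. Set Strict Implicit.

Theorem lemma10 (R : realType) (X : countType) (b : X -> X -> R) (c : X -> R)
  (G : groupType) (act : G -> X -> X) (x0 : X) :
  (forall x y, 0 <= b x y) ->
  (forall x, (\esum_(y in [set: X]) (b x y)%:E < +oo)%E) ->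
  locally_finite b ->
  connected_graph b ->
  is_action act ->
  cocompact act ->
  G_invariant act b c ->
  let K := ptws_closure [set f | Hplus b c f /\ f x0 = 1] in
  let M := [set f | K f /\ multiplicative_fn act f] in
  M = extreme_points (ptws_closure (conv_hull M)).
Proof.
move=> b_ge0 _ b_lf b_conn act_ok cc _ K M.
have KE : K = normalized_harmonic b c x0 := closure_Hplus c b_ge0 b_lf x0.
have M_sub m : M m -> normalized_harmonic b c x0 m /\ normalized_multiplicative act x0 m.
  case; rewrite KE => Km fM; split=> //.
  by case: Km => _ [_ mx0]; exact: multiplicative_normalized fM mx0.
apply/seteqP; split=> [f Mf | p p_ext].
  exact/(multiplicative_extreme b_ge0 b_lf b_conn M_sub cc Mf).
have [Kp _] := closure_conv_hull_sub b_lf M_sub p_ext.1.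
split; first by rewrite KE.
apply: (normalized_multiplicative_fn act_ok (normalized_harmonic_gt0 b_ge0 b_lf b_conn Kp)).
exact/(extreme_normalized_multiplicative b_ge0 b_lf b_conn M_sub p_ext).
Qed.
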